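(* Let $N\ge 2$ and let $s_0,\dots,s_{N-1}$ be independent complex random variables with $\mathbb{E}[s_n]=0$, $\mathbb{E}[|s_n|^2]=1$ and kurtosis $\mu_{4,n}=\mathbb{E}[|s_n|^4]$ (finite). Let $P_0,\dots,P_{N-1}\ge 0$ be deterministic, $\mathbf P=\mathrm{diag}(\sqrt{P_0},\dots,\sqrt{P_{N-1}})$, $\mathbf s=[s_0,\dots,s_{N-1}]^T$, and $\mathbf x=\mathbf F_N^H\mathbf P\mathbf s$, where $\mathbf F_N$ is the unitary $N$-point DFT matrix, i.e. $x[t]=\frac{1}{\sqrt N}\sum_{n=0}^{N-1}\sqrt{P_n}\,s_n e^{j\frac{2\pi}{N}tn}$, $t=0,\dots,N-1$. For $k=0,\dots,N-1$ let $$\mathbf J_k=\begin{bmatrix}\mathbf 0_{(N-k)\times k} & \mathbf I_{N-k}\\ \mathbf I_k & \mathbf 0_{k\times(N-k)}\end{bmatrix}$$ be the $N\times N$ cyclic shift matrix and $r_k=\mathbf x^H\mathbf J_k\mathbf x$. Define the expected sidelobe level $\mathrm{ESL}=\frac{1}{N-1}\sum_{k=1}^{N-1}\mathbb{E}[|r_k|^2]$. Then $$\mathrm{ESL}=\frac{1}{N-1}\left(\sum_{n=0}^{N-1}\big[(N-1)\mu_{4,n}+1\big]P_n^2-\Big(\sum_{n=0}^{N-1}P_n\Big)^2\right).$$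
   Context: Here $\mathbf x$ is a single OFDM symbol with $N$ subcarriers, $s_n$ is the (random) data symbol on subcarrier $n$ drawn from some constellation, $P_n$ the power on subcarrier $n$, and $r_k$ the periodic autocorrelation of $\mathbf x$ at lag $k$. *)

From HB Require Import structures.
From mathcomp Require Import all_boot all_order all_algebra.
From mathcomp Require Import all_classical all_reals all_analysis.
From mathcomp Require Import complex.
Set Implicit Arguments. Unset Strict Implicit. Unset Printing Implicit Defensive.
Import Order.TTheory GRing.Theory Num.Theory.
Local Open Scope ring_scope.
Local Open Scope classical_set_scope.


Definition expj (R : realType) (theta : R) : R[i] := (cos theta +i* sin theta)%C.

Definition cabs2 (R : realType) (z : R[i]) : R := Normc.normc z ^+ 2.

Definition dftmx (R : realType) (N : nat) : 'M[R[i]]_N :=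
  \matrix_(t, n)
    (((Num.sqrt (N%:R : R))^-1)%:C%C
       * expj (- (2 * pi * ((t : nat)%:R * (n : nat)%:R) / N%:R))).

Definition ctrmx (R : realType) m n (A : 'M[R[i]]_(m, n)) : 'M[R[i]]_(n, m) :=
  (map_mx (@conjc R) A)^T.

(* N x N cyclic shift matrix J_k = [[0_{(N-k) x k}, I_{N-k}], [I_k, 0_{k x (N-k)}]],
   written entrywise: (J_k)_{i j} = 1 iff j = (i + k) mod N. *)
Definition shiftmx (R : realType) (N k : nat) : 'M[R[i]]_N :=
  \matrix_(i, j) (((j : nat) == (i + k) %% N)%N)%:R.

Definition powmx (R : realType) (N : nat) (Pw : 'I_N -> R) : 'M[R[i]]_N :=
  diag_mx (\row_n (Num.sqrt (Pw n))%:C%C).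

Definition ofdm_symbol d (T : measurableType d) (R : realType) (N : nat)
  (Pw : 'I_N -> R) (s : 'I_N -> T -> R[i]) (w : T) : 'cV[R[i]]_N :=
  ctrmx (dftmx R N) *m powmx Pw *m (\col_n s n w).

Definition autocorr (R : realType) (N : nat) (x : 'cV[R[i]]_N) (k : nat) : R[i] :=
  (ctrmx x *m shiftmx R N k *m x) ord0 ord0.

(* Mutual independence of complex random variables s_0, ..., s_{N-1}:
   product rule on the generating pi-system of measurable rectangles
   {Re s_n in A_n, Im s_n in B_n} (taking A_n = B_n = setT recovers subfamilies). *)
Definition cindependent d (T : measurableType d) (R : realType)
  (P : probability T R) (N : nat) (s : 'I_N -> T -> R[i]) : Prop :=
  forall A B : 'I_N -> set R,
    (forall n, measurable (A n)) -> (forall n, measurable (B n)) ->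
    P (\bigcap_(n in [set: 'I_N]) [set w : T | A n (complex.Re (s n w)) /\ B n (complex.Im (s n w))])
    = (\prod_(n < N) P [set w : T | A n (complex.Re (s n w)) /\ B n (complex.Im (s n w))])%E.

From HB Require Import structures.
From mathcomp Require Import all_boot all_order all_algebra.
From mathcomp Require Import all_classical all_reals all_analysis.
From mathcomp Require Import complex measurable_realfun.
From mathcomp Require Import ring lra.

(* Write [om = e^{j 2 pi / N}], a primitive [N]-th root of unity.  The OFDM symbol is
   [x_t = sum_n a_n om^(t n)] with [|a_n|^2 = P_n |s_n|^2 / N], so orthogonality of the
   characters [t |-> om^(t n)] turns its periodic autocorrelation into
   [r_k = sum_n u_n om^(k n)] with [u_n = P_n |s_n|^2], and Parseval gives pointwise
   [sum_(1 <= k < N) |r_k|^2 = N sum_n u_n^2 - (sum_n u_n)^2], the subtracted term being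
   [|r_0|^2].  In expectation [E[u_n^2] = P_n^2 mu4_n], while for [n <> m] independence
   of the real and imaginary parts of [s_n] and [s_m] gives [E[u_n u_m] = P_n P_m]. *)

Set Implicit Arguments.
Unset Strict Implicit.
Unset Printing Implicit Defensive.

Import Order.TTheory GRing.Theory Num.Theory.
Local Open Scope ring_scope.

Lemma sumr_expr_unity_root (F : idomainType) (N : nat) (z : F) : z ^+ N = 1 ->
  \sum_(k < N) z ^+ k = if z == 1 then N%:R else 0.
Proof.
move=> zN1; have [->|z_neq1] := eqVneq z 1.
  by under eq_bigr do rewrite expr1n; rewrite sumr_const card_ord.
have /eqP : (z - 1) * \sum_(k < N) z ^+ k = 0 by rewrite -subrX1 zN1 subrr.
by rewrite mulf_eq0 subr_eq0 (negbTE z_neq1) => /eqP.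
Qed.

Definition reim (R : Type) (b : bool) (z : R[i]) : R :=
  if b then complex.Re z else complex.Im z.

Section complex_sq_norm.
Variable R : realType.
Implicit Types (z : R[i]) (x : R).

Lemma cabs2_ReIm z : cabs2 z = complex.Re z ^+ 2 + complex.Im z ^+ 2.
Proof. by case: z => a b; rewrite /cabs2 /= sqr_sqrtr // addr_ge0 // sqr_ge0. Qed.

Lemma cabs2_reim z : cabs2 z = \sum_(p : bool) reim p z ^+ 2.
Proof. by rewrite cabs2_ReIm big_bool. Qed.

Lemma cabs2_ge0 z : 0 <= cabs2 z.
Proof. by rewrite cabs2_ReIm addr_ge0 // sqr_ge0. Qed.

Lemma cabs2E z : (cabs2 z)%:C%C = conjc z * z.
Proof. by case: z => a b; rewrite cabs2_ReIm /=; congr (_ +i* _)%C; ring. Qed.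

Lemma cabs2_real x : cabs2 x%:C%C = x ^+ 2.
Proof. by rewrite cabs2_ReIm /= expr0n addr0. Qed.

Lemma cabs2M z1 z2 : cabs2 (z1 * z2) = cabs2 z1 * cabs2 z2.
Proof. by apply: complexI; rewrite cabs2E [RHS]rmorphM /= !cabs2E rmorphM /=; ring. Qed.

Lemma cabs2_real_lincomb (I : finType) (u : I -> R) (c : I -> R[i]) :
  cabs2 (\sum_i (u i)%:C%C * c i) =
  (\sum_i u i * complex.Re (c i)) ^+ 2 + (\sum_i u i * complex.Im (c i)) ^+ 2.
Proof.
have ReD : {morph @complex.Re R : z1 z2 / z1 + z2 >-> (z1 + z2 : R)} by case=> ? ? [].
have ImD : {morph @complex.Im R : z1 z2 / z1 + z2 >-> (z1 + z2 : R)} by case=> ? ? [].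
rewrite cabs2_ReIm (big_morph (@complex.Re R) ReD (erefl _)).
rewrite (big_morph (@complex.Im R) ImD (erefl _)).
by congr (_ ^+ 2 + _ ^+ 2); apply: eq_bigr => i _; case: (c i) => a b /=; ring.
Qed.

End complex_sq_norm.

Lemma autocorrE (R : realType) (N : nat) (N_gt0 : (0 < N)%N) (x : 'cV[R[i]]_N) k :
  autocorr x k =
  \sum_(t < N) conjc (x t ord0) * x (Ordinal (ltn_pmod (t + k) N_gt0)) ord0.
Proof.
rewrite /autocorr !mxE; under eq_bigr do rewrite !mxE mulr_suml.
rewrite exchange_big /=; apply: eq_bigr => t _.
rewrite (bigD1 (Ordinal (ltn_pmod (t + k) N_gt0))) //= big1 ?addr0.
  by rewrite /ctrmx !mxE eqxx mulr1.
move=> j /negbTE jt; rewrite !mxE.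
suff /negbTE -> : (j : nat) != ((t + k) %% N)%N by rewrite mulr0 mul0r.
by apply: contraFN jt => /eqP jE; apply/eqP/val_inj.
Qed.

Section dft.
Variables (R : realType) (N : nat) (om : R[i]).
Hypothesis om_prim : N.-primitive_root om.
Hypothesis conjc_om : conjc om = om^-1.

Let N_gt0 : (0 < N)%N := prim_order_gt0 om_prim.

Lemma dft_orthogonality (n m : 'I_N) :
  \sum_(t < N) conjc (om ^+ (t * n)) * om ^+ (t * m) = (n == m)%:R * N%:R.
Proof.
have om_neq0 : om != 0 by rewrite (prim_root_eq0 om_prim) -lt0n.
pose z := om ^+ m / om ^+ n.
have -> : \sum_(t < N) conjc (om ^+ (t * n)) * om ^+ (t * m) = \sum_(t < N) z ^+ t.
  apply: eq_bigr => t _.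
  by rewrite rmorphXn /= conjc_om exprVn mulrC exprMn exprVn -!exprM ![(_ * t)%N]mulnC.
have zN : z ^+ N = 1.
  rewrite exprMn exprVn -!exprM ![(_ * N)%N]mulnC !exprM (prim_expr_order om_prim).
  by rewrite !expr1n invr1 mulr1.
have z_eq1 : (z == 1) = (n == m).
  rewrite -(inj_eq (mulIf (expf_neq0 n om_neq0))) divfK ?expf_neq0 // mul1r.
  by rewrite (eq_prim_root_expr om_prim) !modn_small // eq_sym.
by rewrite sumr_expr_unity_root // z_eq1; case: eqP; rewrite ?mul1r ?mul0r.
Qed.

Lemma dft_parseval_inner (a b : 'I_N -> R[i]) :
  \sum_(t < N) conjc (\sum_(n < N) a n * om ^+ (t * n)) * \sum_(m < N) b m * om ^+ (t * m)
  = N%:R * \sum_(n < N) conjc (a n) * b n.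
Proof.
transitivity (\sum_(n < N) \sum_(m < N) conjc (a n) * b m *
    \sum_(t < N) conjc (om ^+ (t * n)) * om ^+ (t * m)).
  under eq_bigr do rewrite rmorph_sum mulr_suml; rewrite exchange_big /=.
  apply: eq_bigr => n _; under eq_bigr do rewrite mulr_sumr; rewrite exchange_big /=.
  apply: eq_bigr => m _; rewrite mulr_sumr; apply: eq_bigr => t _.
  by rewrite rmorphM /=; ring.
rewrite mulr_sumr; apply: eq_bigr => n _.
under eq_bigr do rewrite dft_orthogonality.
rewrite (bigD1 n) //= eqxx mul1r big1 ?addr0 1?mulrC // => m nm.
by rewrite eq_sym (negbTE nm) mul0r mulr0.
Qed.

Lemma dft_parseval (a : 'I_N -> R[i]) :
  \sum_(k < N) cabs2 (\sum_(n < N) a n * om ^+ (k * n)) = N%:R * \sum_(n < N) cabs2 (a n).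
Proof.
apply: complexI; rewrite rmorphM !rmorph_sum rmorph_nat /=.
under eq_bigr do rewrite cabs2E; under [X in _ = _ * X]eq_bigr do rewrite cabs2E.
exact: dft_parseval_inner.
Qed.

Lemma autocorr_idft (a : 'I_N -> R[i]) (x : 'cV[R[i]]_N) k :
  (forall t : 'I_N, x t ord0 = \sum_(n < N) a n * om ^+ (t * n)) ->
  autocorr x k = N%:R * \sum_(n < N) conjc (a n) * a n * om ^+ (k * n).
Proof.
move=> xE; under [X in _ = _ * X]eq_bigr do rewrite -mulrA.
rewrite -dft_parseval_inner (autocorrE N_gt0).
apply: eq_bigr => t _; rewrite !xE /=; congr (_ * _); apply: eq_bigr => n _.
rewrite -mulrA -exprD -mulnDl addnC -(prim_expr_mod om_prim) modnMml.
by rewrite (prim_expr_mod om_prim).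
Qed.

Lemma sum_cabs2_dft_real (u : 'I_N -> R) :
  \sum_(1 <= k < N) cabs2 (\sum_(n < N) (u n)%:C%C * om ^+ (k * n))
  = N%:R * \sum_(n < N) u n ^+ 2 - (\sum_(n < N) u n) ^+ 2.
Proof.
have := dft_parseval (fun n => (u n)%:C%C).
rewrite -(big_mkord xpredT (fun k => cabs2 (\sum_(n < N) (u n)%:C%C * om ^+ (k * n)))).
rewrite (big_ltn N_gt0) /=; under eq_bigr do rewrite mul0n expr0 mulr1.
under [X in _ = _ * X]eq_bigr do rewrite cabs2_real.
by rewrite -rmorph_sum cabs2_real => <-; rewrite [_ ^+ 2 + _]addrC addrK.
Qed.

End dft.

Section expj.
Variable R : realType.
Implicit Type t : R.

Lemma expjD t1 t2 : expj (t1 + t2) = expj t1 * expj t2.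
Proof. by rewrite /expj cosD sinD /=; congr (_ +i* _)%C; ring. Qed.

Lemma expjM_natl (m : nat) t : expj (m%:R * t) = expj t ^+ m.
Proof.
elim: m => [|m IH]; first by rewrite mul0r expr0 /expj cos0 sin0.
by rewrite -addn1 natrD mulrDl expjD IH mul1r exprD expr1.
Qed.

Lemma expjN t : expj (- t) = (expj t)^-1.
Proof. by apply/esym/mulr1_eq; rewrite -expjD subrr /expj cos0 sin0. Qed.

Lemma conjc_expj t : conjc (expj t) = (expj t)^-1.
Proof. by rewrite -expjN /expj cosN sinN. Qed.

Lemma expj_prim_root (N : nat) : (0 < N)%N -> N.-primitive_root (expj (2 * pi / N%:R : R)).
Proof.
move=> N_gt0; have N_neq0 : (N%:R : R) != 0 by rewrite pnatr_eq0 -lt0n.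
apply/andP; split=> //; apply/forallP => j; rewrite unity_rootE -expjM_natl.
have [jN|jN] := eqVneq j.+1 N.
  by rewrite jN mulrCA divff // mulr1 mulr_natl /expj cos2pi sin2pi eqxx.
rewrite eqbF_neg; apply/eqP; rewrite /expj => -[cos1 _].
pose phi : R := j.+1%:R * pi / N%:R.
have phi_bnd : 0 < phi < pi.
  apply/andP; split; first by rewrite divr_gt0 ?mulr_gt0 ?pi_gt0 ?ltr0n.
  rewrite ltr_pdivrMr ?ltr0n // mulrC ltr_pM2l ?pi_gt0 // ltr_nat ltn_neqAle jN.
  exact: ltn_ord.
have phi2 : j.+1%:R * (2 * pi / N%:R) = phi *+ 2 by rewrite /phi -mulr_natr; field.
rewrite phi2 cos_mulr2n -mulr_natr in cos1.
have /eqP : sin phi ^+ 2 = 0 by rewrite sin2cos2; lra.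
rewrite sqrf_eq0 => /eqP sin_phi0.
by have := sin_gt0_pi phi_bnd; rewrite sin_phi0 ltxx.
Qed.

End expj.

Section ofdm.
Variables (d : measure_display) (T : measurableType d) (R : realType) (N : nat).
Hypothesis N_gt0 : (0 < N)%N.
Variables (Pw : 'I_N -> R) (s : 'I_N -> T -> R[i]).
Hypothesis Pw_ge0 : forall n, 0 <= Pw n.

Local Notation om := (expj (2 * pi / N%:R : R)).
Let om_prim : N.-primitive_root om := expj_prim_root R N_gt0.
Let conjc_om : conjc om = om^-1 := conjc_expj _.

Lemma ctrmx_dftmxE (t n : 'I_N) :
  ctrmx (dftmx R N) t n = ((Num.sqrt (N%:R : R))^-1)%:C%C * om ^+ (t * n).
Proof.
have conjcM (z1 z2 : R[i]) : conjc (z1 * z2) = conjc z1 * conjc z2 := rmorphM _ z1 z2.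
rewrite !mxE conjcM conjc_real conjc_expj -expjN opprK -expjM_natl.
by congr (_ * expj _); rewrite natrM; ring.
Qed.

Lemma ofdm_symbol_idft w (t : 'I_N) :
  ofdm_symbol Pw s w t ord0 =
  \sum_(n < N) ((Num.sqrt (N%:R : R))^-1 * Num.sqrt (Pw n))%:C%C * s n w * om ^+ (t * n).
Proof.
rewrite /ofdm_symbol /powmx mul_mx_diag mxE; apply: eq_bigr => n _.
by rewrite mxE ctrmx_dftmxE !mxE rmorphM; ring.
Qed.

Lemma autocorr_ofdm w k :
  autocorr (ofdm_symbol Pw s w) k =
  \sum_(n < N) (Pw n * cabs2 (s n w))%:C%C * om ^+ (k * n).
Proof.
rewrite (autocorr_idft om_prim conjc_om _ (ofdm_symbol_idft w)).
rewrite mulr_sumr; apply: eq_bigr => n _; rewrite mulrA; congr (_ * _).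
rewrite -cabs2E cabs2M cabs2_real -(rmorph_nat (@real_complex R)) -rmorphM /=.
congr (_%:C)%C; rewrite exprMn exprVn !sqr_sqrtr ?ler0n // !mulrA mulfV ?mul1r //.
by rewrite pnatr_eq0 -lt0n.
Qed.

Lemma sum_cabs2_autocorr_ofdm w :
  \sum_(1 <= k < N) cabs2 (autocorr (ofdm_symbol Pw s w) k)
  = N%:R * \sum_(n < N) (Pw n * cabs2 (s n w)) ^+ 2
    - (\sum_(n < N) Pw n * cabs2 (s n w)) ^+ 2.
Proof.
under eq_bigr do rewrite autocorr_ofdm.
exact: sum_cabs2_dft_real om_prim conjc_om _.
Qed.

End ofdm.

Local Open Scope classical_set_scope.

Section ge0_integral_real.
Context d (T : measurableType d) (R : realType) (mu : measure T R).
Local Open Scope ereal_scope.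
Implicit Types f g : T -> R.

Lemma ge0_integralD_real f g :
  measurable_fun setT f -> measurable_fun setT g ->
  (forall w, 0 <= f w)%R -> (forall w, 0 <= g w)%R ->
  \int[mu]_w (f w + g w)%:E = \int[mu]_w (f w)%:E + \int[mu]_w (g w)%:E.
Proof.
move=> mf mg f0 g0; under eq_integral do rewrite EFinD.
by apply: ge0_integralD => //; [move=> w _; rewrite lee_fin|exact/measurable_EFinP
  |move=> w _; rewrite lee_fin|exact/measurable_EFinP].
Qed.

Lemma ge0_integralZl_real (k : R) f :
  measurable_fun setT f -> (0 <= k)%R -> (forall w, 0 <= f w)%R ->
  \int[mu]_w (k * f w)%:E = k%:E * \int[mu]_w (f w)%:E.
Proof.
move=> mf k0 f0; under eq_integral do rewrite EFinM.
by apply: ge0_integralZl_EFin => // [w _|]; rewrite ?lee_fin //; exact/measurable_EFinP.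
Qed.

Lemma ge0_integral_sum_real (I : Type) (r : seq I) (f : I -> T -> R) :
  (forall i, measurable_fun setT (f i)) -> (forall i w, 0 <= f i w)%R ->
  \int[mu]_w (\sum_(i <- r) f i w)%:E = \sum_(i <- r) \int[mu]_w (f i w)%:E.
Proof.
move=> mf f0; under eq_integral do rewrite -sumEFin.
by apply: ge0_integral_sum => // [i|i w _]; [exact/measurable_EFinP|rewrite lee_fin].
Qed.

End ge0_integral_real.

Section independence.
Context d (T : measurableType d) (R : realType) (P : probability T R).
Local Open Scope ereal_scope.

Lemma ge0_integral_indepM (X Y : T -> R) (f g : R -> R) :
  measurable_fun setT X -> measurable_fun setT Y ->
  measurable_fun setT f -> measurable_fun setT g ->
  (forall x, 0 <= f x)%R -> (forall y, 0 <= g y)%R ->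
  (forall A B, measurable A -> measurable B ->
     P (X @^-1` A `&` Y @^-1` B) = P (X @^-1` A) * P (Y @^-1` B)) ->
  \int[P]_w (f (X w) * g (Y w))%:E =
  \int[P]_w (f (X w))%:E * \int[P]_w (g (Y w))%:E.
Proof.
move=> mX mY mf mg f0 g0 indepXY.
pose X' : {mfun T >-> R} := HB.pack X (isMeasurableFun.Build _ _ _ _ _ mX).
pose Y' : {mfun T >-> R} := HB.pack Y (isMeasurableFun.Build _ _ _ _ _ mY).
have mXY : measurable_fun setT (fun w => (X w, Y w)) by exact: measurable_fun_pair.
pose XY : {mfun T >-> (R * R)%type} := HB.pack (fun w => (X w, Y w))
  (isMeasurableFun.Build _ _ _ _ _ mXY).
have mfg : measurable_fun setT (fun z : R * R => (f z.1 * g z.2)%:E).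
  by apply/measurable_EFinP/measurable_funM; apply: measurableT_comp.
have fg0 z : 0 <= (f z.1 * g z.2)%:E by rewrite lee_fin mulr_ge0.
(* The joint law of [(X, Y)] agrees with the product of the marginal laws on
   rectangles, hence on all measurable sets; Fubini-Tonelli then factors the integral. *)
have joint_product : \int[distribution P XY]_z (f z.1 * g z.2)%:E =
    \int[distribution P X' \x distribution P Y']_z (f z.1 * g z.2)%:E.
  apply: eq_measure_integral => A mA _; apply/esym/product_measure_unique => //.
transitivity (\int[distribution P XY]_z (f z.1 * g z.2)%:E).
  by rewrite ge0_integral_pushforward // preimage_setT.
rewrite joint_product fubini_tonelli1 // /fubini_F /=.
have mfE : measurable_fun setT (fun x => (f x)%:E) by exact/measurable_EFinP.
have mgE : measurable_fun setT (fun y => (g y)%:E) by exact/measurable_EFinP.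
have f0E x : 0 <= (f x)%:E by rewrite lee_fin.
have g0E y : 0 <= (g y)%:E by rewrite lee_fin.
under eq_integral do rewrite ge0_integralZl_real //.
rewrite ge0_integralZr //; last exact: integral_ge0.
by rewrite !ge0_integral_pushforward.
Qed.

End independence.

Section cindependent.
Context d (T : measurableType d) (R : realType) (P : probability T R) (N : nat)
  (s : 'I_N -> T -> R[i]).
Hypothesis s_indep : cindependent P s.
Local Open Scope ereal_scope.

Let rect n (A B : set R) := [set w | A (complex.Re (s n w)) /\ B (complex.Im (s n w))].

Lemma cindependent_pair (a b : 'I_N) (A B A' B' : set R) : a != b ->
  measurable A -> measurable B -> measurable A' -> measurable B' ->
  P (rect a A B `&` rect b A' B') = P (rect a A B) * P (rect b A' B').
Proof.
move=> ab mA mB mA' mB'.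
pose sideRe n := if n == a then A else if n == b then A' else setT.
pose sideIm n := if n == a then B else if n == b then B' else setT.
have mRe n : measurable (sideRe n) by rewrite /sideRe; repeat case: ifP => _.
have mIm n : measurable (sideIm n) by rewrite /sideIm; repeat case: ifP => _.
have ba : (b == a) = false by apply/negbTE; rewrite eq_sym.
have rect_a : rect a (sideRe a) (sideIm a) = rect a A B by rewrite /sideRe /sideIm eqxx.
have rect_b : rect b (sideRe b) (sideIm b) = rect b A' B' by rewrite /sideRe /sideIm ba eqxx.
have rect_other n : n != a -> n != b -> rect n (sideRe n) (sideIm n) = setT.
  move=> /negbTE na /negbTE nb; rewrite /sideRe /sideIm na nb.
  by apply/seteqP; split.
have cap : \bigcap_(n in [set: 'I_N]) rect n (sideRe n) (sideIm n) =
    rect a A B `&` rect b A' B'.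
  rewrite -rect_a -rect_b; apply/seteqP; split=> [w Hw|w [Ha Hb] n _]; first by split; apply: Hw.
  have [->//|na] := eqVneq n a; have [->//|nb] := eqVneq n b.
  by rewrite rect_other.
have prod : \prod_(n < N) P (rect n (sideRe n) (sideIm n)) = P (rect a A B) * P (rect b A' B').
  rewrite (bigD1 a) // (bigD1 b) 1?eq_sym //= rect_a rect_b big1 ?mule1 // => n /andP[nb na].
  by rewrite rect_other // probability_setT.
by rewrite -cap -prod; exact: s_indep.
Qed.

Let reim_preimage n p (X : set R) :
  (reim p \o s n) @^-1` X = rect n (if p then X else setT) (if p then setT else X).
Proof. by case: p; apply/seteqP; split=> w //= []. Qed.

Lemma cindependent_reim (a b : 'I_N) (p q : bool) (A B : set R) : a != b ->
  measurable A -> measurable B ->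
  P ((reim p \o s a) @^-1` A `&` (reim q \o s b) @^-1` B) =
  P ((reim p \o s a) @^-1` A) * P ((reim q \o s b) @^-1` B).
Proof. by move=> ab mA mB; rewrite !reim_preimage cindependent_pair //; case: p; case: q. Qed.

Hypothesis s_mRe : forall n, measurable_fun setT (fun w => complex.Re (s n w)).
Hypothesis s_mIm : forall n, measurable_fun setT (fun w => complex.Im (s n w)).

Lemma measurable_reim n p : measurable_fun setT (reim p \o s n).
Proof. by case: p; [exact: s_mRe|exact: s_mIm]. Qed.

Lemma measurable_cabs2 n : measurable_fun setT (fun w => cabs2 (s n w)).
Proof.
under eq_fun do rewrite cabs2_ReIm.
by apply: measurable_funD; apply: measurable_funX.
Qed.

Lemma ge0_integral_cabs2M_indep (a b : 'I_N) : a != b ->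
  \int[P]_w (cabs2 (s a w) * cabs2 (s b w))%:E =
  \int[P]_w (cabs2 (s a w))%:E * \int[P]_w (cabs2 (s b w))%:E.
Proof.
move=> ab.
have msq n p : measurable_fun setT (fun w => reim p (s n w) ^+ 2)%R.
  exact/measurable_funX/measurable_reim.
have sq0 n p w : (0 <= reim p (s n w) ^+ 2)%R by exact: sqr_ge0.
have mprod p q : measurable_fun setT (fun w => reim p (s a w) ^+ 2 * reim q (s b w) ^+ 2)%R.
  exact: measurable_funM.
have prod0 p q w : (0 <= reim p (s a w) ^+ 2 * reim q (s b w) ^+ 2)%R.
  exact: mulr_ge0.
have indep_sq p q : \int[P]_w (reim p (s a w) ^+ 2 * reim q (s b w) ^+ 2)%:E =
    \int[P]_w (reim p (s a w) ^+ 2)%:E * \int[P]_w (reim q (s b w) ^+ 2)%:E.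
  apply: (ge0_integral_indepM (f := (fun x => x ^+ 2)%R) (g := (fun x => x ^+ 2)%R)
    (measurable_reim a p) (measurable_reim b q)) => //; try exact: sqr_ge0.
  by move=> A B mA mB; exact: cindependent_reim.
have int_sq0 n p : 0 <= \int[P]_w (reim p (s n w) ^+ 2)%:E.
  by apply: integral_ge0 => w _; rewrite lee_fin.
under eq_integral => w _.
  rewrite !cabs2_reim mulr_suml; under eq_bigr do rewrite mulr_sumr.
  over.
rewrite ge0_integral_sum_real => [|p|p w]; first last.
- by apply: sumr_ge0 => q _.
- exact: measurable_sum.
under eq_bigr do rewrite (ge0_integral_sum_real _ _ (mprod _) (prod0 _)).
under eq_bigr do under eq_bigr do rewrite indep_sq.
under eq_bigr do rewrite -ge0_sume_distrr //.
rewrite -ge0_sume_distrl //.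
by congr (_ * _); under eq_integral do rewrite cabs2_reim; rewrite ge0_integral_sum_real.
Qed.

End cindependent.

Section sidelobe.
Context d (T : measurableType d) (R : realType) (P : probability T R) (N : nat)
  (s : 'I_N -> T -> R[i]) (mu4 Pw : 'I_N -> R).
Hypothesis N_gt0 : (0 < N)%N.
Hypothesis s_mRe : forall n, measurable_fun setT (fun w => complex.Re (s n w)).
Hypothesis s_mIm : forall n, measurable_fun setT (fun w => complex.Im (s n w)).
Hypothesis s_indep : cindependent P s.
Hypothesis Pw_ge0 : forall n, 0 <= Pw n.
Local Open Scope ereal_scope.
Hypothesis Es2 : forall n, 'E_P[fun w => cabs2 (s n w)] = 1.
Hypothesis Es4 : forall n, 'E_P[(fun w => cabs2 (s n w) ^+ 2)%R] = (mu4 n)%:E.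

Let mcabs2 := measurable_cabs2 s_mRe s_mIm.

Let int_cabs2 n : \int[P]_w (cabs2 (s n w))%:E = 1.
Proof. by rewrite -(Es2 n) expectation.unlock. Qed.

Let int_cabs2_sqr n : \int[P]_w ((cabs2 (s n w) ^+ 2)%R)%:E = (mu4 n)%:E.
Proof. by rewrite -(Es4 n) expectation.unlock. Qed.

Lemma measurable_cabs2_autocorr k :
  measurable_fun setT (fun w => cabs2 (autocorr (ofdm_symbol Pw s w) k)).
Proof.
under eq_fun do rewrite autocorr_ofdm // cabs2_real_lincomb.
by apply: measurable_funD; apply/measurable_funX/measurable_sum => n;
  do 2 apply: measurable_funM => //.
Qed.

Lemma integral_sqr_total_power :
  \int[P]_w (((\sum_(n < N) Pw n * cabs2 (s n w)) ^+ 2)%R)%:E =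
  (((\sum_(n < N) Pw n) ^+ 2 + \sum_(n < N) Pw n ^+ 2 * (mu4 n - 1))%R)%:E.
Proof.
have Emoment n m : \int[P]_w ((cabs2 (s n w) * cabs2 (s m w))%R)%:E =
    (if n == m then mu4 n else 1)%:E.
  have [<-|nm] := eqVneq n m; last by rewrite ge0_integral_cabs2M_indep // !int_cabs2 mule1.
  by under eq_integral do rewrite -expr2.
transitivity (\sum_(n < N) \sum_(m < N)
    ((Pw n * Pw m * if n == m then mu4 n else 1)%R)%:E).
  have mprod n m : measurable_fun setT (fun w => cabs2 (s n w) * cabs2 (s m w))%R.
    exact: measurable_funM.
  have prod0 n m w : (0 <= cabs2 (s n w) * cabs2 (s m w))%R.
    exact: mulr_ge0 (cabs2_ge0 _) (cabs2_ge0 _).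
  have term0 n m w : (0 <= Pw n * Pw m * (cabs2 (s n w) * cabs2 (s m w)))%R.
    exact: mulr_ge0 (mulr_ge0 (Pw_ge0 n) (Pw_ge0 m)) (prod0 n m w).
  under eq_integral => w _.
    rewrite expr2 mulr_suml; under eq_bigr => n _.
      rewrite mulr_sumr; under eq_bigr do rewrite mulrACA.
      over.
    over.
  rewrite ge0_integral_sum_real => [|n|n w]; first last.
  - by apply: sumr_ge0 => m _.
  - by apply: measurable_sum => m; apply: measurable_funM.
  apply: eq_bigr => n _; rewrite ge0_integral_sum_real => [|m|m w]; first last.
  - exact: term0.
  - exact: measurable_funM.
  apply: eq_bigr => m _.
  rewrite (ge0_integralZl_real _ (mprod n m) (mulr_ge0 (Pw_ge0 n) (Pw_ge0 m)) (prod0 n m)).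
  by rewrite [RHS]EFinM; congr (_ * _); exact: Emoment.
under eq_bigr do rewrite sumEFin.
rewrite sumEFin; congr EFin.
rewrite expr2 mulr_suml -big_split /=; apply: eq_bigr => n _.
rewrite mulr_sumr (bigD1 n) //= [in RHS](bigD1 n) //= eqxx.
rewrite (eq_bigr (fun m => Pw n * Pw m)%R); first by ring.
by move=> m /negbTE mn; rewrite eq_sym mn mulr1.
Qed.

Lemma integral_sum_sqr_power :
  \int[P]_w ((\sum_(n < N) (Pw n * cabs2 (s n w)) ^+ 2)%R)%:E =
  (\sum_(n < N) Pw n ^+ 2 * mu4 n)%:E.
Proof.
under eq_integral do under eq_bigr do rewrite exprMn.
rewrite ge0_integral_sum_real => [|n|n w]; first last.
- by rewrite mulr_ge0 ?sqr_ge0.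
- by apply: measurable_funM => //; exact/measurable_funX/mcabs2.
rewrite -sumEFin; apply: eq_bigr => n _.
rewrite ge0_integralZl_real ?sqr_ge0 ?int_cabs2_sqr //; last by move=> w; exact: sqr_ge0.
exact/measurable_funX/mcabs2.
Qed.

Lemma sum_expectation_cabs2_autocorr :
  \sum_(1 <= k < N) 'E_P[fun w => cabs2 (autocorr (ofdm_symbol Pw s w) k)] =
  ((N%:R * \sum_(n < N) Pw n ^+ 2 * mu4 n)
   - ((\sum_(n < N) Pw n) ^+ 2 + \sum_(n < N) Pw n ^+ 2 * (mu4 n - 1)))%:E.
Proof.
have mpow n : measurable_fun setT (fun w => Pw n * cabs2 (s n w))%R.
  exact: measurable_funM.
pose G w := (\sum_(1 <= k < N) cabs2 (autocorr (ofdm_symbol Pw s w) k))%R.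
have -> : \sum_(1 <= k < N) 'E_P[fun w => cabs2 (autocorr (ofdm_symbol Pw s w) k)] =
    \int[P]_w (G w)%:E.
  rewrite ge0_integral_sum_real => [|k|k w]; last exact: cabs2_ge0.
  - by apply: eq_bigr => k _; rewrite expectation.unlock.
  - exact: measurable_cabs2_autocorr.
have : \int[P]_w (G w)%:E + \int[P]_w (((\sum_(n < N) Pw n * cabs2 (s n w)) ^+ 2)%R)%:E =
    \int[P]_w ((N%:R * \sum_(n < N) (Pw n * cabs2 (s n w)) ^+ 2)%R)%:E.
  rewrite -ge0_integralD_real.
  - by apply: eq_integral => w _; rewrite /G sum_cabs2_autocorr_ofdm // subrK.
  - by apply: measurable_sum => k; exact: measurable_cabs2_autocorr.
  - by apply/measurable_funX/measurable_sum.
  - by move=> w; apply: sumr_ge0 => k _; exact: cabs2_ge0.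
  - by move=> w; exact: sqr_ge0.
rewrite integral_sqr_total_power ge0_integralZl_real ?ler0n //; first last.
- by move=> w; apply: sumr_ge0 => n _; exact: sqr_ge0.
- by apply: measurable_sum => n; exact: measurable_funX.
rewrite integral_sum_sqr_power -EFinM EFinB => <-.
by rewrite addeK.
Qed.

End sidelobe.

Theorem proposition1 (d : measure_display) (T : measurableType d) (R : realType)
  (P : probability T R) (N : nat) (s : 'I_N -> T -> R[i])
  (mu4 : 'I_N -> R) (Pw : 'I_N -> R) :
  (2 <= N)%N ->
  (forall n, measurable_fun setT (fun w => complex.Re (s n w))) ->
  (forall n, measurable_fun setT (fun w => complex.Im (s n w))) ->
  cindependent P s ->
  (forall n, 'E_P[(fun w => complex.Re (s n w))%R] = 0)%E ->
  (forall n, 'E_P[(fun w => complex.Im (s n w))%R] = 0)%E ->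
  (forall n, 'E_P[(fun w => cabs2 (s n w))%R] = 1)%E ->
  (forall n, 'E_P[(fun w => cabs2 (s n w) ^+ 2)%R] = (mu4 n)%:E)%E ->
  (forall n, 0 <= Pw n) ->
  ((\sum_(1 <= k < N)
       'E_P[(fun w => cabs2 (autocorr (ofdm_symbol Pw s w) k))%R])
     * ((N.-1%:R)^-1)%:E)%E
  = (((N.-1%:R)^-1) * (\sum_(n < N) ((N.-1%:R * mu4 n + 1) * Pw n ^+ 2)
       - (\sum_(n < N) Pw n) ^+ 2))%:E.
Proof.
move=> N_ge2 s_mRe s_mIm s_indep _ _ Es2 Es4 Pw_ge0.
have N_gt0 : (0 < N)%N by apply: leq_trans N_ge2.
rewrite (sum_expectation_cabs2_autocorr N_gt0 s_mRe s_mIm s_indep Pw_ge0 Es2 Es4).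
rewrite -EFinM; congr EFin; rewrite mulrC; congr (_ * _).
have -> : (N.-1%:R : R) = N%:R - 1 by rewrite -subn1 natrB.
have -> : \sum_(n < N) ((N%:R - 1) * mu4 n + 1) * Pw n ^+ 2 =
    N%:R * \sum_(n < N) Pw n ^+ 2 * mu4 n - \sum_(n < N) Pw n ^+ 2 * (mu4 n - 1).
  by rewrite mulr_sumr -sumrB; apply: eq_bigr => n _; ring.
by ring.
Qed.
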